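(* Let $n>1$, $a\in\mathcal{T}_n$, and consider the semigroup $(\mathcal{T}_n,*_a)$. Let $x\in\mathcal{T}_n$. If $\operatorname{rank}(x)\le\operatorname{rank}(a)$, $|\operatorname{ran}(x)\cap M|\le1$ for every block $M$ of $\rho_a$, and $B\cap\operatorname{ran}(a)\ne\varnothing$ for every block $B$ of $\rho_x$, then $$H_x=\{y\in\mathcal{T}_n : \rho_y=\rho_x,\ \operatorname{ran}(y)=\operatorname{ran}(x),\ |\operatorname{ran}(y)\cap M|\le1 \ \forall \text{ blocks } M \text{ of } \rho_a,\ B\cap\operatorname{ran}(a)\ne\varnothing\ \forall \text{ blocks } B \text{ of } \rho_y\}.$$ Otherwise $H_x=\{x\}$.
   Context: $\mathcal{T}_n$ is the set of all maps $N\to N$, $N=\{1,\dots,n\}$. Maps are composed from left to right: $(xy)(i)=y(x(i))$. For fixed $a\in\mathcal{T}_n$, $x*_a y:=xay$; $(\mathcal{T}_n,*_a)$ is a semigroup. $\operatorname{ran}(x)$ is the image of $x$, $\operatorname{rank}(x)=|\operatorname{ran}(x)|$, and $\rho_x$ is the partition of $N$ into the nonempty fibres of $x$ ($i,j$ in the same block iff $x(i)=x(j)$). Green's relations in a semigroup $S$: with $S^1$ the semigroup $S$ with an identity adjoined, $x\mathcal{L}y$ iff $S^1x=S^1y$, $x\mathcal{R}y$ iff $xS^1=yS^1$, $\mathcal{H}=\mathcal{L}\cap\mathcal{R}$; $H_x$ denotes the $\mathcal{H}$-class of $x$ in $(\mathcal{T}_n,*_a)$. *)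

From mathcomp Require Import all_boot.
Set Implicit Arguments. Unset Strict Implicit. Unset Printing Implicit Defensive.

(* T_n : all maps N -> N with N = {0,..,n-1} (standing for {1,..,n}). *)
Definition Tn (n : nat) := {ffun 'I_n -> 'I_n}.

(* left-to-right composition: (comp x y) i = y (x i) *)
Definition comp n (x y : Tn n) : Tn n := [ffun i => y (x i)].

Definition sandwich n (a x y : Tn n) : Tn n := comp (comp x a) y.

Definition ran n (x : Tn n) : {set 'I_n} := [set x i | i in 'I_n].
Definition rank n (x : Tn n) : nat := #|ran x|.

Definition rho n (x : Tn n) : {set {set 'I_n}} :=
  [set x @^-1: [set j] | j in ran x].

(* Green's relations in (T_n, *_a) with identity adjoined *)
Definition in_left_ideal n (a x y : Tn n) : bool :=
  (x == y) || [exists s : Tn n, x == sandwich a s y].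
Definition in_right_ideal n (a x y : Tn n) : bool :=
  (x == y) || [exists s : Tn n, x == sandwich a y s].
Definition Lrel n (a x y : Tn n) : bool :=
  in_left_ideal a x y && in_left_ideal a y x.
Definition Rrel n (a x y : Tn n) : bool :=
  in_right_ideal a x y && in_right_ideal a y x.
Definition Hrel n (a x y : Tn n) : bool := Lrel a x y && Rrel a x y.

Definition Hclass n (a x : Tn n) : {set Tn n} := [set y | Hrel a x y].

Definition good n (a y : Tn n) : bool :=
  [forall M in rho a, #|ran y :&: M| <= 1] &&
  [forall B in rho y, B :&: ran a != set0].

From mathcomp Require Import all_boot.
Set Implicit Arguments. Unset Strict Implicit. Unset Printing Implicit Defensive.

(* In (T_n, *_a), a relation x = y a s forces ker y <= ker x, and x = s a y
   forces ran x <= ran y.  Hence two distinct R-related maps have the same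
   kernel, and composing the two factorizations, x = x a t a s, shows that a
   is injective on ran x; this is the first half of [good].  Dually, two
   distinct L-related maps have the same range, and x = x a t a s shows that
   every value of x is of the form x (a k), which is the second half of
   [good].  Both implications reverse by building s explicitly.  Finally
   injectivity of a on ran x gives rank x <= rank a, so the rank condition
   of the statement is redundant. *)

Section SandwichGreen.
Variable n : nat.
Implicit Types a x y s : Tn n.

Definition sep_ran a y := [forall M in rho a, #|ran y :&: M| <= 1].
Definition meets_ran a y := [forall B in rho y, B :&: ran a != set0].

Lemma goodE a y : good a y = sep_ran a y && meets_ran a y.
Proof. by []. Qed.

Lemma sandwichE a x y i : sandwich a x y i = y (a (x i)).
Proof. by rewrite !ffunE. Qed.

Lemma mem_ran y i : y i \in ran y.
Proof. exact: imset_f. Qed.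

Lemma ranP y j : reflect (exists i, j = y i) (j \in ran y).
Proof. by apply: (iffP imsetP) => [[i _ ->]|[i ->]]; exists i. Qed.

Lemma fibre_in_rho y i : y @^-1: [set y i] \in rho y.
Proof. exact/imset_f/mem_ran. Qed.

Lemma sep_ranP a y : reflect {in ran y &, injective a} (sep_ran a y).
Proof.
apply: (iffP forall_inP) => [sep _ _ /ranP[i ->] /ranP[j ->] Eaij|inj_a M].
  move/card_le1_eqP: (sep _ (fibre_in_rho a (y i))); apply;
    by rewrite !inE ?Eaij eqxx mem_ran.
case/imsetP => j _ ->; apply/card_le1_eqP => u v.
rewrite !inE => /andP[u_ran /eqP Eu] /andP[v_ran /eqP Ev].
by apply: inj_a; rewrite // Eu Ev.
Qed.

Lemma meets_ranP a y :
  reflect (forall i, exists k, y (a k) = y i) (meets_ran a y).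
Proof.
apply: (iffP forall_inP) => [meet i|reach B].
  case/set0Pn: (meet _ (fibre_in_rho y i)) => m.
  by rewrite !inE => /andP[/eqP Em /ranP[k Ek]]; exists k; rewrite -Ek.
case/imsetP => j /ranP[i ->] ->; have [k Ek] := reach i.
by apply/set0Pn; exists (a k); rewrite !inE Ek eqxx mem_ran.
Qed.

Lemma eq_rhoP x y :
  reflect (forall i j, (y i == y j) = (x i == x j)) (rho y == rho x).
Proof.
apply: (iffP eqP) => [Erho i j|Eker].
  have ker_sub x' y' : rho y' = rho x' -> y' i = y' j -> x' i = x' j.
    move=> Erho' Eyij; have := fibre_in_rho y' i.
    rewrite Erho' => /imsetP[m _ Em].
    have : i \in y' @^-1: [set y' i] by rewrite !inE.
    have : j \in y' @^-1: [set y' i] by rewrite !inE Eyij.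
    by rewrite Em !inE => /eqP -> /eqP ->.
  by apply/eqP/eqP; apply: ker_sub.
apply/setP => B; apply/imsetP/imsetP => -[_ /ranP[i ->] ->].
  by exists (x i); rewrite ?mem_ran //; apply/setP => k; rewrite !inE Eker.
by exists (y i); rewrite ?mem_ran //; apply/setP => k; rewrite !inE Eker.
Qed.

Lemma sandwich_right_factor a x y :
    {in ran y &, injective a} -> (forall i j, y i = y j -> x i = x j) ->
  exists s, x = sandwich a y s.
Proof.
move=> inj_a ker_sub.
exists [ffun k => if [pick i | a (y i) == k] is Some i then x i else k].
apply/ffunP => i; rewrite sandwichE ffunE.
case: pickP => [i' /eqP Ea|/(_ i)]; last by rewrite eqxx.
by apply: ker_sub; apply: inj_a; rewrite ?mem_ran.
Qed.

Lemma sandwich_left_factor a x y :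
  (forall i, exists k, x i = y (a k)) -> exists s, x = sandwich a s y.
Proof.
move=> reach.
exists [ffun i => if [pick k | y (a k) == x i] is Some k then k else i].
apply/ffunP => i; rewrite sandwichE ffunE.
case: pickP => [k /eqP -> //|none]; have [k Ek] := reach i.
by move: (none k); rewrite Ek eqxx.
Qed.

Lemma Rrel_neqE a x y : x != y ->
  Rrel a x y = [&& rho y == rho x, sep_ran a x & sep_ran a y].
Proof.
move=> neq_xy; rewrite /Rrel /in_right_ideal (negbTE neq_xy).
rewrite eq_sym (negbTE neq_xy) /=.
apply/andP/and3P => [[/existsP[s /eqP Ex] /existsP[t /eqP Ey]]|].
  have ex i : x i = s (a (y i)) by rewrite Ex sandwichE.
  have ey i : y i = t (a (x i)) by rewrite Ey sandwichE.
  have ker_yx i j : y i = y j -> x i = x j by move=> Eij; rewrite !ex Eij.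
  have ker_xy i j : x i = x j -> y i = y j by move=> Eij; rewrite !ey Eij.
  split.
  - by apply/eq_rhoP => i j; apply/eqP/eqP; [apply: ker_yx | apply: ker_xy].
  - apply/sep_ranP => _ _ /ranP[i ->] /ranP[j ->] Ea.
    by apply: ker_yx; rewrite !ey Ea.
  - apply/sep_ranP => _ _ /ranP[i ->] /ranP[j ->] Ea.
    by apply: ker_xy; rewrite !ex Ea.
move=> [/eq_rhoP Eker /sep_ranP inj_x /sep_ranP inj_y].
split; apply/existsP.
- have [|s ->] := sandwich_right_factor inj_y (x := x); last by exists s.
  by move=> i j /eqP; rewrite Eker => /eqP.
- have [|s ->] := sandwich_right_factor inj_x (x := y); last by exists s.
  by move=> i j /eqP; rewrite -Eker => /eqP.
Qed.

Lemma Lrel_neqE a x y : x != y ->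
  Lrel a x y = [&& ran y == ran x, meets_ran a x & meets_ran a y].
Proof.
move=> neq_xy; rewrite /Lrel /in_left_ideal (negbTE neq_xy).
rewrite eq_sym (negbTE neq_xy) /=.
apply/andP/and3P => [[/existsP[s /eqP Ex] /existsP[t /eqP Ey]]|].
  have ex i : x i = y (a (s i)) by rewrite Ex sandwichE.
  have ey i : y i = x (a (t i)) by rewrite Ey sandwichE.
  split.
  - apply/eqP/setP => u; apply/ranP/ranP => -[i ->].
      by exists (a (t i)); rewrite ey.
    by exists (a (s i)); rewrite ex.
  - by apply/meets_ranP => i; exists (t (a (s i))); rewrite -ey -ex.
  - by apply/meets_ranP => i; exists (s (a (t i))); rewrite -ex -ey.
have reach_of x' y' : ran y' = ran x' -> meets_ran a y' ->
    exists s, x' = sandwich a s y'.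
  move=> Eran /meets_ranP reach; apply: sandwich_left_factor => i.
  have := mem_ran x' i; rewrite -Eran => /ranP[j ->].
  by have [k Ek] := reach j; exists k.
move=> [/eqP Eran reach_x reach_y]; split; apply/existsP.
- by have [s ->] := reach_of x y Eran reach_y; exists s.
- by have [s ->] := reach_of y x (esym Eran) reach_x; exists s.
Qed.

Lemma HrelE a x y : Hrel a x y =
  (x == y) || [&& rho y == rho x, ran y == ran x, good a x & good a y].
Proof.
have [<-|neq_xy] := eqVneq x y.
  by rewrite /Hrel /Lrel /Rrel /in_left_ideal /in_right_ideal eqxx.
rewrite /Hrel Lrel_neqE // Rrel_neqE // !goodE /=.
by case: (rho y == rho x) (ran y == ran x) (sep_ran a x) (sep_ran a y)
         (meets_ran a x) (meets_ran a y) => [] [] [] [] [] [].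
Qed.

Lemma rank_le_of_sep_ran a x : sep_ran a x -> rank x <= rank a.
Proof.
move=> /sep_ranP inj_a; rewrite /rank -(card_in_imset inj_a).
by apply/subset_leq_card/subsetP => _ /imsetP[u _ ->]; apply/ranP; exists u.
Qed.

End SandwichGreen.

Theorem theorem6 (n : nat) (hn : 1 < n) (a x : Tn n) :
  Hclass a x =
  if (rank x <= rank a) && good a x then
    [set y : Tn n | [&& rho y == rho x, ran y == ran x & good a y]]
  else [set x].
Proof.
apply/setP => y; rewrite /Hclass inE HrelE.
have [good_x|bad_x] := boolP (good a x); last by rewrite !andbF orbF inE eq_sym.
rewrite rank_le_of_sep_ran ?inE; last by case/andP: good_x.
by have [<-|_] := eqVneq x y; rewrite ?eqxx.
Qed.
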